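(* Let $k$ be an algebraically closed field of characteristic $p>0$, let $G$ be a finite group, $K$ a subgroup of index $m$, and $W$ a finite-dimensional $kK$-module. Let $g_1 = 1, g_2, \dots, g_m$ be representatives of the left cosets of $K$ in $G$, and let $V = \mathrm{Ind}_K^G(W) = W_1\oplus\cdots\oplus W_m$ with $W_i = g_i\otimes W$. Write $\mathrm{End}_k(V) = \bigoplus_{i,j}\mathrm{Hom}_k(W_i,W_j)$ and let $\pi_{ij}: \mathrm{End}_k(V)\to \mathrm{Hom}_k(W_i,W_j)$ be the corresponding projections. Let $\rho: G\to\mathrm{GL}(V)$ be the representation. If $(G,V)$ is weakly adequate, then for each $j$, the set $\{\pi_{1j}(\rho(g)) : g \in g_jK,\ g \text{ has order prime to } p\}$ spans $\mathrm{Hom}_k(W_1,W_j)$. In particular, if some coset $g_jK$ contains no element of order prime to $p$, then $(G,V)$ is not weakly adequate.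
   Context: $(G,V)$ is weakly adequate if $\mathrm{End}_k(V)$ is spanned by $\{\rho(g): g\in G,\ \rho(g)\text{ semisimple}\}$. *)

From HB Require Import structures.
From mathcomp Require Import all_boot all_order all_algebra all_fingroup mxrepresentation.
Set Implicit Arguments. Unset Strict Implicit. Unset Printing Implicit Defensive.
Import GRing.Theory.
Local Open Scope ring_scope.

(* Convention: a matrix representation rW : mx_representation k K n is read
   as acting on COLUMN vectors (rW (x * y) = rW x *m rW y is exactly the
   multiplicativity of a left module action), so that a block (j, i) of an
   endomorphism of W_1 (+) ... (+) W_m is a map W_i -> W_j. *)

Definition spanned_by (F : fieldType) (I : finType) (n : nat)
  (A : {set I}) (P : I -> Prop) (f : I -> 'M[F]_n) : Prop :=
  forall M : 'M[F]_n, exists c : I -> F,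
    (forall i, c i != 0 -> i \in A /\ P i) /\ M = \sum_(i in A) c i *: f i.

(* (G, rho) is weakly adequate: End_k(V) is spanned by the semisimple
   rho(g), g in G (semisimple = diagonalizable, k algebraically closed). *)
Definition weakly_adequate (F : fieldType) (gT : finGroupType)
  (G : {group gT}) (N : nat) (rho : gT -> 'M[F]_N) : Prop :=
  spanned_by G (fun x => diagonalizable (rho x)) rho.

(* Induced representation Ind_K^G W, W_i = g_i (x) W, on the block space
   W_0 (+) ... (+) W_(m-1): x (g_i (x) w) = g_j (x) (h w) where
   x g_i = g_j h, h in K; block (j, i) of Ind x is rW (g_j^-1 x g_i) if this
   lies in K, and 0 otherwise. *)
Definition ind_mx (F : fieldType) (gT : finGroupType) (K : {group gT})
  (n m : nat) (rW : mx_representation F K n) (g : 'I_m -> gT) (x : gT)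
  : 'M[F]_(\sum_(i < m) n) :=
  \mxblock_(j < m, i < m)
     (if ((g j)^-1 * x * g i)%g \in K then rW ((g j)^-1 * x * g i)%g else 0 : 'M[F]_n).

Definition pi_blk (F : fieldType) (n m : nat)
  (A : 'M[F]_(\sum_(i < m) n)) (i j : 'I_m) : 'M[F]_n :=
  submxblock A j i.

(* In characteristic p, a semisimple matrix A with A^(p^e) = 1 is the
   identity.  Hence if rho(x) is semisimple then the
   p-part x_p acts trivially and rho(x) = rho(x_p'), x_p' being a p'-element.
   A spanning family of semisimple rho(x) for End(V) projects onto a spanning
   family of Hom(W_1, W_j); replacing each x by x_p' does not change its
   projection, and the projection of rho(y) vanishes unless y lies in g_j K. *)

From mathcomp Require Import all_boot all_order all_algebra all_fingroup pgroup
  mxrepresentation.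
Import GRing.Theory.
Set Implicit Arguments. Unset Strict Implicit. Unset Printing Implicit Defensive.
Local Open Scope ring_scope.

Lemma pchar_expr_eq1 (F : fieldType) (p e : nat) (z : F) :
  p \in [pchar F] -> z ^+ (p ^ e) = 1 -> z = 1.
Proof.
move=> pcharFp; elim: e z => [|e IHe] z; first by rewrite expr1.
rewrite expnS exprM => /IHe zp1; apply: (fmorph_inj (pFrobenius_aut pcharFp)).
by rewrite rmorph1 [LHS]pFrobenius_autE.
Qed.

Lemma diag_mxX (F : pzRingType) n (d : 'rV[F]_n) k :
  diag_mx d ^+ k = diag_mx (map_mx (fun a => a ^+ k) d).
Proof.
elim: k => [|k IHk]; first by apply/matrixP => i j; rewrite !mxE.
rewrite exprS IHk -mulmxE mul_diag_mx; apply/matrixP => i j; rewrite !mxE.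
by case: eqP => [->|]; rewrite ?mulr1n ?mulr0n ?mulr0 ?exprS.
Qed.

Lemma conjVmxX (F : fieldType) n (P A : 'M[F]_n) k : P \in unitmx ->
  (invmx P *m A *m P) ^+ k = invmx P *m A ^+ k *m P.
Proof.
move=> Punit; elim: k => [|k IHk]; first by rewrite !expr0 mulmx1 mulVmx.
by rewrite !exprS IHk -!mulmxE !mulmxA mulmxK.
Qed.

Lemma diagonalizableX (F : fieldType) n (A : 'M[F]_n) k :
  diagonalizable A -> diagonalizable (A ^+ k).
Proof.
move=> [P Punit /(diagonalizable_forLR Punit)[d ->]]; exists P => //.
apply/(diagonalizable_forLR Punit); exists (map_mx (fun a => a ^+ k) d).
by rewrite !mxpoly.conjVmx // conjVmxX // diag_mxX.
Qed.

Lemma diagonalizable_unipotent (F : fieldType) (p e : nat) n (A : 'M[F]_n) :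
  p \in [pchar F] -> diagonalizable A -> A ^+ (p ^ e) = 1 -> A = 1.
Proof.
move=> pcharFp [P Punit /(diagonalizable_forLR Punit)[d ->]].
rewrite !mxpoly.conjVmx // conjVmxX // diag_mxX.
have conj_eq1 B : invmx P *m B *m P = 1 -> B = 1.
  move/(congr1 (fun C => P *m C *m invmx P)).
  by rewrite !mulmxA mulmxV // mul1mx mulmxK // mulmx1 mulmxV.
move=> /conj_eq1 /matrixP dXe1; suff -> : diag_mx d = 1 by rewrite mulmx1 mulVmx.
apply/matrixP => i j; rewrite !mxE; case: eqP => [->|]; rewrite ?mulr1n ?mulr0n //.
by have := dXe1 j j; rewrite !mxE eqxx !mulr1n; apply: pchar_expr_eq1.
Qed.

Lemma sum_scale_reindex (R : pzRingType) (V : lmodType R) (T : finType)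
    (A C : {pred T}) (phi : T -> T) (c : T -> R) (f : T -> V) :
  (forall x, x \in A -> c x != 0 -> f x = f (phi x)) ->
  (forall y, y \notin C -> f y = 0) ->
  \sum_(x in A) c x *: f x = \sum_(y in C) (\sum_(x in A | phi x == y) c x) *: f y.
Proof.
move=> f_phi f_out.
have -> : \sum_(y in C) (\sum_(x in A | phi x == y) c x) *: f y
        = \sum_y (\sum_(x in A | phi x == y) c x) *: f y.
  rewrite [RHS](bigID (mem C)) /= [X in _ + X]big1 ?addr0 // => y /f_out ->.
  exact: scaler0.
rewrite (eq_bigr (fun x => c x *: f (phi x))); last first.
  by move=> x Ax; have [->|/(f_phi x Ax) ->] := eqVneq (c x) 0; rewrite ?scale0r.
rewrite (partition_big phi predT) //=; apply: eq_bigr => y _; rewrite scaler_suml.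
by apply: eq_bigr => x /andP[_ /eqP ->].
Qed.

Lemma pi_blk_sum (F : fieldType) n m (T : finType) (A : pred T) (c : T -> F)
    (f : T -> 'M[F]_(\sum_(i < m) n)) i j :
  pi_blk (\sum_(x in A) c x *: f x) i j = \sum_(x in A) c x *: pi_blk (f x) i j.
Proof.
rewrite /pi_blk submxblock_sum; apply: eq_bigr => x _.
by apply/matrixP => a b; rewrite !mxE.
Qed.

Lemma spanned_by_pred0 (F : fieldType) (I : finType) N (A : {set I})
    (P : I -> Prop) (f : I -> 'M[F]_N) :
  spanned_by A P f -> (forall x, x \in A -> ~ P x) -> N = 0%N.
Proof.
case: N f => // N f /(_ 1%:M)[c [c_supp one_sum]] noP.
suff : (1 : 'M[F]_N.+1) == 0 by rewrite oner_eq0.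
apply/eqP; rewrite [1]one_sum big1 // => x Ax.
have [->|/c_supp[_ /(noP x Ax)]//] := eqVneq (c x) 0.
exact: scale0r.
Qed.

Lemma weakly_adequate_blk_spanned (F : fieldType) (gT : finGroupType)
    (G : {group gT}) n m (rho : gT -> 'M[F]_(\sum_(i < m) n)) i j :
  weakly_adequate G rho ->
  spanned_by G (fun x => diagonalizable (rho x)) (fun x => pi_blk (rho x) i j).
Proof.
move=> adequate M.
pose B := \mxblock_(j', i') (if (j' == j) && (i' == i) then M else 0 : 'M_n).
have [c [c_supp defB]] := adequate B; exists c; split=> //.
by rewrite -pi_blk_sum -defB /pi_blk mxblockK !eqxx.
Qed.

Local Open Scope group_scope.

Lemma repr_mxX (F : fieldType) (gT : finGroupType) (G : {group gT}) N
    (rho : mx_representation F G N) x a :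
  x \in G -> rho (x ^+ a) = (rho x ^+ a)%R.
Proof.
move=> Gx; elim: a => [|a IHa]; first by rewrite expg0 expr0 repr_mx1.
by rewrite expgS exprS repr_mxM ?groupX // IHa.
Qed.

Lemma repr_mx_constt_p' (F : fieldType) (p : nat) (gT : finGroupType)
    (G : {group gT}) N (rho : mx_representation F G N) x :
  p \in [pchar F] -> x \in G -> diagonalizable (rho x) -> rho x = rho x.`_p^'.
Proof.
move=> pcharFp Gx diag_x.
have rho_p : rho x.`_p = 1%R.
  rewrite /constt repr_mxX //.
  apply: (diagonalizable_unipotent (e := logn p #[x]) pcharFp).
    exact: diagonalizableX.
  rewrite -!repr_mxX ?groupX // -[x ^+ _]/(x.`_p) -p_part -order_constt.
  by rewrite expg_order repr_mx1.
by rewrite -{1}(consttC p x) repr_mxM ?groupX // rho_p mul1mx.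
Qed.

Section InducedRepresentation.

Variables (k : fieldType) (gT : finGroupType) (G K : {group gT}) (n m : nat).
Variables (rW : mx_representation k K n) (g : 'I_m -> gT).
Hypotheses (Gg : forall i, g i \in G)
           (cosets_cover : forall x, x \in G -> exists i, x \in g i *: K)
           (cosets_disjoint : forall i j, (g i)^-1 * g j \in K -> i = j).

Lemma ind_mx1 : ind_mx rW g 1 = 1%R.
Proof.
rewrite -[RHS](mxdiagZ 1) /mxdiag /ind_mx; apply: eq_mxblock => j i.
rewrite mulg1; case: eqP => [<-|nji].
  by rewrite mulVg group1 repr_mx1 conform_mx_id.
by rewrite ifF //; apply/negbTE/negP => /cosets_disjoint.
Qed.

Lemma ind_mxM : {in G &, {morph ind_mx rW g : x y / x * y >-> (x *m y)%R}}.
Proof.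
move=> x y Gx Gy; rewrite /ind_mx mul_mxblock; apply: eq_mxblock => j i.
have [l] := cosets_cover (groupM Gy (Gg i)); rewrite mem_lcoset mulgA => Kyi.
rewrite (bigD1 l) //= big1 ?addr0 => [|l' l'l]; last first.
  rewrite [X in (_ *m X)%R]ifF ?mulmx0 //; apply: contraNF l'l => Kl'.
  apply/eqP/cosets_disjoint.
  suff -> : (g l')^-1 * g l = ((g l')^-1 * y * g i) * ((g l)^-1 * y * g i)^-1.
    by rewrite groupM ?groupV.
  by rewrite !invMg invgK !mulgA !mulgK.
have split_xy : (g j)^-1 * x * g l * ((g l)^-1 * y * g i) = (g j)^-1 * (x * y) * g i.
  by rewrite !mulgA mulgK.
rewrite Kyi -split_xy groupMr //.
by case: ifP => Kxl; [rewrite repr_mxM | rewrite mul0mx].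
Qed.

Definition ind_repr : mx_representation k G (\sum_(i < m) n) :=
  MxRepresentation (conj ind_mx1 ind_mxM).

Lemma pi_blk_ind_mx_out i j x :
  g i = 1 -> x \notin g j *: K -> pi_blk (ind_mx rW g x) i j = 0%R.
Proof. by move=> gi1 Kx; rewrite /pi_blk mxblockK gi1 mulg1 ifN // -mem_lcoset. Qed.

Lemma ind_blk_spanned_p'_elts (p : nat) i0 j :
  p \in [pchar k] -> g i0 = 1 -> weakly_adequate G (ind_mx rW g) ->
  spanned_by (g j *: K) (fun x => coprime #[x] p)
    (fun x => pi_blk (ind_mx rW g x) i0 j).
Proof.
move=> pcharkp gi0 adequate M.
have [c [c_supp ->]] := weakly_adequate_blk_spanned i0 j adequate M.
rewrite (sum_scale_reindex (phi := constt^~ p^') (C := g j *: K)); first last.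
- by move=> y; apply: pi_blk_ind_mx_out.
- move=> x Gx /c_supp[_ diag_x].
  by rewrite [ind_mx rW g x](repr_mx_constt_p' (rho := ind_repr) pcharkp).
exists (fun y => if y \in g j *: K then \sum_(x in G | x.`_p^' == y) c x else 0%R).
split; last by apply: eq_bigr => y Ky; rewrite Ky.
move=> y; case: ifP => [Ky nz_y|_]; last by rewrite eqxx.
split=> //; apply: contraNT nz_y => p_y; apply/eqP/big1 => x /andP[_ /eqP def_y].
move: p_y; rewrite -def_y (p'nat_coprime (p_elt_constt p^' x)) //.
exact/pnat_id/(pcharf_prime pcharkp).
Qed.

End InducedRepresentation.

Theorem lemma5p1 (k : closedFieldType) (p : nat) (gT : finGroupType)
  (G K : {group gT}) (n m : nat) (rW : mx_representation k K n)
  (g : 'I_m.+1 -> gT) :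
  p \in [pchar k] ->
  K \subset G ->
  g ord0 = 1 ->
  (forall i, g i \in G) ->
  (forall x, x \in G -> exists i, x \in g i *: K) ->
  (forall i j, (g i)^-1 * g j \in K -> i = j) ->
  (weakly_adequate G (ind_mx rW g) ->
     forall j : 'I_m.+1,
       spanned_by (g j *: K) (fun x => coprime #[x] p)
         (fun x => pi_blk (ind_mx rW g x) ord0 j))
  /\
  ((0 < n)%N -> (exists j : 'I_m.+1, forall x, x \in g j *: K -> ~~ coprime #[x] p) ->
     ~ weakly_adequate G (ind_mx rW g)).
Proof.
move=> pcharkp _ g0 Gg cosets_cover cosets_disjoint.
have spanned j :=
  ind_blk_spanned_p'_elts (rW := rW) Gg cosets_cover cosets_disjoint j pcharkp g0.
split=> [adequate j | n_gt0 [j no_p'] adequate]; first exact: spanned.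
have n0 := spanned_by_pred0 (spanned j adequate) (fun x Kx => negP (no_p' x Kx)).
by rewrite n0 in n_gt0.
Qed.
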